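(* Let $X=G/K$ be a symmetric space of non-compact type of rank $r$, with base point, Cartan decomposition $\mathfrak g=\mathfrak k+\mathfrak p$ and $\mathfrak p$ identified with the tangent space at the base point. Let $1\le k\le r$ and suppose $Y\times\mathbb R^k\subset X$ is a totally geodesic submanifold through the base point (a Riemannian product with an isometric Euclidean $\mathbb R^k$-factor) with $\dim(Y\times\mathbb R^k)=\mathrm{srk}^k(X)$; let $V_k\subset\mathfrak p$ be the $k$-dimensional subspace tangent to the $\mathbb R^k$-factor. Then for any maximal abelian subspace $\mathfrak a\subset\mathfrak p$ containing $V_k$, the Lie triple system corresponding to $Y\times\mathbb R^k$ is $\mathfrak p'=\mathfrak a\oplus\bigoplus_{\alpha\in\Lambda^+,\ \alpha(V_k)=0}\mathfrak p_\alpha$.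
   Context: $\mathrm{srk}^k(X)$, the $k$-th splitting rank, is the maximal dimension of a totally geodesic submanifold of $X$ which splits off an isometric $\mathbb R^k$-factor. For a maximal abelian $\mathfrak a\subset\mathfrak p$, $\Lambda$ is the set of restricted roots, $\Lambda^+$ the positive roots, $\mathfrak p_\alpha=(\mathfrak g_\alpha\oplus\mathfrak g_{-\alpha})\cap\mathfrak p$. Totally geodesic submanifolds through the base point correspond to Lie triple systems $\mathfrak p'\subset\mathfrak p$ (subspaces with $[\mathfrak p',[\mathfrak p',\mathfrak p']]\subset\mathfrak p'$) via tangent spaces. *)

(* real semisimple Lie algebras of noncompact type realised as
   transpose-closed Lie algebras of real n x n matrices (Cartan involution
   theta X = - X^T, k = skew part, p = symmetric part). *)
From HB Require Import structures.
From mathcomp Require Import all_boot all_order all_algebra.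
From mathcomp Require Import reals.
Set Implicit Arguments. Unset Strict Implicit. Unset Printing Implicit Defensive.
Import Order.TTheory GRing.Theory Num.Theory.
Local Open Scope ring_scope.

Section SymSpace.
Variables (R : realType) (n : nat).
Local Notation mx := 'M[R]_n.

Definition lie (A B : mx) : mx := A *m B - B *m A.

Definition lie_subalg (g : {vspace mx}) :=
  forall A B, A \in g -> B \in g -> lie A B \in g.
Definition transpose_closed (g : {vspace mx}) :=
  forall A, A \in g -> A^T \in g.

Definition is_ideal (g I : {vspace mx}) :=
  (I <= g)%VS /\ forall A B, A \in g -> B \in I -> lie A B \in I.

Definition semisimple (g : {vspace mx}) :=
  forall I, is_ideal g I -> (forall A B, A \in I -> B \in I -> lie A B = 0) ->
    I = 0%VS.

Definition no_compact_ideal (g : {vspace mx}) :=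
  forall I, is_ideal g I -> (forall A, A \in I -> A^T = - A) -> I = 0%VS.

Definition noncompact_type (g : {vspace mx}) :=
  [/\ lie_subalg g, transpose_closed g, semisimple g & no_compact_ideal g].

Definition in_p (g : {vspace mx}) (X : mx) := X \in g /\ X^T = X.
Definition sub_p (g S : {vspace mx}) := forall X, X \in S -> in_p g X.

Definition abelian_sub (S : {vspace mx}) :=
  forall A B, A \in S -> B \in S -> lie A B = 0.

Definition max_abelian (g a : {vspace mx}) :=
  [/\ sub_p g a, abelian_sub a &
      forall b, sub_p g b -> abelian_sub b -> (a <= b)%VS -> b = a].

Definition rank_is (g : {vspace mx}) (r : nat) :=
  exists a, max_abelian g a /\ \dim a = r.

Definition lts (g P : {vspace mx}) :=
  sub_p g P /\ forall A B C, A \in P -> B \in P -> C \in P ->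
    lie A (lie B C) \in P.

(* the totally geodesic submanifold Exp(P) splits off an isometric R^k factor
   tangent to V *)
Definition splits_with (g P V : {vspace mx}) (k : nat) :=
  [/\ lts g P, (V <= P)%VS, \dim V = k &
      forall v w, v \in V -> w \in P -> lie v w = 0].

Definition splits (g P : {vspace mx}) (k : nat) :=
  exists V, splits_with g P V k.

Definition srk_is (g : {vspace mx}) (k d : nat) :=
  (exists P, splits g P k /\ \dim P = d) /\
  (forall P, splits g P k -> (\dim P <= d)%N).

Definition root_space (g a : {vspace mx}) (al : mx -> R) (X : mx) :=
  X \in g /\ forall H, H \in a -> lie H X = al H *: X.

Definition is_root (g a : {vspace mx}) (al : mx -> R) :=
  [/\ (forall (s t : R) H H', H \in a -> H' \in a ->
          al (s *: H + t *: H') = s * al H + t * al H'),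
      (exists H, H \in a /\ al H != 0) &
      (exists X, X != 0 /\ root_space g a al X)].

Definition p_root (g a : {vspace mx}) (al : mx -> R) (X : mx) :=
  X^T = X /\ exists Y Z, [/\ root_space g a al Y,
                            root_space g a (fun H => - al H) Z & X = Y + Z].

(* H0 in a is regular: no root vanishes on it; it defines the positive
   system Lambda^+ = {alpha | alpha(H0) > 0} *)
Definition regular (g a : {vspace mx}) (H0 : mx) :=
  H0 \in a /\ forall al, is_root g a al -> al H0 != 0.

Definition in_a_plus_roots (g a V : {vspace mx}) (H0 : mx) (X : mx) :=
  exists (H : mx) (m : nat) (al : 'I_m -> mx -> R) (Xs : 'I_m -> mx),
    [/\ H \in a,
        forall i, [/\ is_root g a (al i), 0 < al i H0,
                      (forall v, v \in V -> al i v = 0) & p_root g a (al i) (Xs i)] &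
        X = H + \sum_(i < m) Xs i].

End SymSpace.

(* The Lie triple system of [Y x R^k] is contained in the centralizer
   Z = {X in p | [V_k, X] = 0}, and Z is itself a Lie triple system splitting off
   the flat factor with tangent space V_k (Jacobi identity; V_k is abelian). By
   maximality of dim (Y x R^k) = srk^k(X), the two coincide. Every X in Z is then
   diagonalised by the commuting symmetric operators ad H, H in a (simultaneous
   eigendecomposition of commuting symmetric matrices over a real closed field):
   its weight components centralize V_k, so their weights vanish on V_k, and the
   symmetrized components lie in a (weight 0, by regularity of H0) or in some
   p_alpha with alpha positive. *)

From HB Require Import structures.
From mathcomp Require Import all_boot all_order all_algebra.
From mathcomp Require Import reals.
From mathcomp Require Import complex ring.
Set Implicit Arguments. Unset Strict Implicit. Unset Printing Implicit Defensive.
Import Order.TTheory GRing.Theory Num.Theory.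
Local Open Scope ring_scope.

Lemma rcf_poly_factor (R : rcfType) (p : {poly R}) : (1 < size p)%N ->
  (exists l r, p = r * ('X - l%:P)) \/
  (exists a b r, b != 0 /\ p = r * (('X - a%:P) ^+ 2 + (b ^+ 2)%:P)).
Proof.
move=> sp; pose f := real_complex R.
have [[a b] rz] : exists z, root (map_poly f p) z.
  by apply/closed_rootP; rewrite size_map_poly gtn_eqF.
case: (eqVneq b 0) rz => [->|bn0] rz.
  left; have /factor_theorem[r ->] : root p a by rewrite -(fmorph_root f).
  by exists a, r.
right; exists a, b, (p %/ (('X - a%:P) ^+ 2 + (b ^+ 2)%:P)); split => //.
apply/esym/divpK; rewrite -(dvdp_map f).
(* the quadratic factor is (X - z) (X - conj z) for the non-real root z *)
have -> : map_poly f (('X - a%:P) ^+ 2 + (b ^+ 2)%:P) =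
    \prod_(z <- [:: (a +i* b)%C; (a -i* b)%C]) ('X - z%:P).
  rewrite big_cons big_seq1 rmorphD rmorphXn rmorphB /= map_polyX !map_polyC /=.
  set z := (a +i* b)%C; set w := (a -i* b)%C.
  have zDw : z + w = (a + a)%:C%C.
    by apply/eqP; rewrite eq_complex /= subrr !eqxx.
  have zMw : z * w = (a ^+ 2 + b ^+ 2)%:C%C.
    by apply/eqP; rewrite eq_complex /= !expr2; apply/andP; split; apply/eqP; ring.
  transitivity ('X ^+ 2 - (z + w)%:P * 'X + (z * w)%:P); last by ring.
  by rewrite zDw zMw !rmorphD /=; ring.
apply: uniq_roots_dvdp.
  rewrite /= rz andbT.
  have := complex_root_conj (map_poly f p) (a +i* b)%C.
  by rewrite -map_poly_comp (eq_map_poly (conjc_real (R:=R))) rz => <-.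
rewrite uniq_rootsE /= inE andbT eq_complex /= eqxx /=.
apply: contra bn0 => /eqP e; have : b + b = 0 by rewrite {2}e subrr.
by move/eqP; rewrite -mulr2n -mulr_natr mulf_eq0 pnatr_eq0 orbF.
Qed.

Section RowSqnorm.
Variables (R : rcfType) (m : nat).
Implicit Types (u : 'rV[R]_m) (A : 'M[R]_m).

Definition rv_sqnorm u := (u *m u^T) 0 0.

Lemma rv_sqnormE u : rv_sqnorm u = \sum_j u 0 j ^+ 2.
Proof. by rewrite /rv_sqnorm mxE; apply: eq_bigr => j _; rewrite mxE expr2. Qed.

Lemma rv_sqnorm_ge0 u : 0 <= rv_sqnorm u.
Proof. by rewrite rv_sqnormE sumr_ge0 // => j _; rewrite sqr_ge0. Qed.

Lemma rv_sqnorm_eq0 u : rv_sqnorm u = 0 -> u = 0.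
Proof.
rewrite rv_sqnormE => /eqP; rewrite psumr_eq0 => [/allP uj0|j _]; last first.
  by rewrite sqr_ge0.
apply/rowP => j; rewrite mxE; apply/eqP; rewrite -sqrf_eq0.
by have /implyP := uj0 j (mem_index_enum j); apply.
Qed.

Lemma sym_mulmx_sqr_eq0 A u : A^T = A -> u *m A *m A = 0 -> u *m A = 0.
Proof.
move=> symA uAA0; apply: rv_sqnorm_eq0.
by rewrite /rv_sqnorm trmx_mul symA mulmxA uAA0 mul0mx mxE.
Qed.

End RowSqnorm.

Section HornerMx.
Variables (R : comNzRingType) (n : nat) (A : 'M[R]_n.+1).

Lemma horner_mxM p q : horner_mx A (p * q) = horner_mx A p *m horner_mx A q.
Proof. exact: rmorphM. Qed.

Lemma horner_mx_XsubC a : horner_mx A ('X - a%:P) = A - a%:M.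
Proof. by rewrite rmorphB /= horner_mx_X horner_mx_C. Qed.

End HornerMx.

Section CyclicSpan.
Variables (R : fieldType) (n : nat).
Implicit Types (u w : 'rV[R]_n.+1) (A : 'M[R]_n.+1) (As : seq 'M[R]_n.+1).

Definition stable_pred As (Q : 'rV[R]_n.+1 -> Prop) :=
  [/\ forall u w, Q u -> Q w -> Q (u + w), forall (c : R) u, Q u -> Q (c *: u)
    & forall A u, A \in As -> Q u -> Q (u *m A)].

Definition cyclic_mem As w u :=
  forall Q, stable_pred As Q -> Q w -> Q u.

Lemma cyclic_mem_refl As w : cyclic_mem As w w.
Proof. by []. Qed.

Lemma cyclic_mem_trans As w u v :
  cyclic_mem As w u -> cyclic_mem As u v -> cyclic_mem As w v.
Proof. by move=> wu uv Q stQ Qw; apply: uv => //; apply: wu. Qed.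

Lemma cyclic_mem_subset As Bs w u :
  {subset As <= Bs} -> cyclic_mem As w u -> cyclic_mem Bs w u.
Proof. by move=> sAB wu Q [QD QZ QM]; apply: wu; split=> // A v /sAB; apply: QM. Qed.

Lemma cyclic_mem_horner A As w p :
  A \in As -> cyclic_mem As w (w *m horner_mx A p).
Proof.
move=> AAs Q [QD QZ QM] Qw; elim/poly_ind: p => [|p c IHp].
  by rewrite rmorph0 mulmx0 -(scale0r w); apply: QZ.
rewrite rmorphD rmorphM /= horner_mx_X horner_mx_C mulmxDr mulmxA mul_mx_scalar.
by apply: QD; [apply: QM | apply: QZ].
Qed.

Lemma eigen_pred_stable A B (c : R) : A *m B = B *m A ->
  stable_pred [:: A] (fun u => u *m B = c *: u).
Proof.
move=> cAB; split=> [u v uB vB|d u uB|A' u /predU1P [->|//] uB].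
- by rewrite mulmxDl uB vB scalerDr.
- by rewrite -scalemxAl uB !scalerA mulrC.
- by rewrite -mulmxA cAB mulmxA uB scalemxAl.
Qed.

End CyclicSpan.

Lemma big_refine (V : nmodType) (I S : eqType) (t : seq I) (f : I -> V)
    (g : S -> V) (Q : S -> Prop) :
  (forall i, i \in t -> exists s, f i = \sum_(z <- s) g z /\ forall z, z \in s -> Q z) ->
  exists s, \sum_(i <- t) f i = \sum_(z <- s) g z /\ forall z, z \in s -> Q z.
Proof.
elim: t => [|i t IHt] ft; first by exists [::]; rewrite !big_nil.
have [s1 [fi Qs1]] := ft i (mem_head _ _).
have [s2 [ft' Qs2]] : exists s, \sum_(i <- t) f i = \sum_(z <- s) g z /\ forall z, z \in s -> Q z.
  by apply: IHt => j jt; apply: ft; rewrite inE jt orbT.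
exists (s1 ++ s2); rewrite big_cat big_cons fi ft'; split=> // z.
by rewrite mem_cat => /orP[]; [apply: Qs1 | apply: Qs2].
Qed.

Section SymmetricOperator.
Variables (R : rcfType) (n : nat) (A : 'M[R]_n.+1).
Hypothesis symA : A^T = A.
Implicit Types (u w : 'rV[R]_n.+1) (p q r : {poly R}).

(* [(A - a)^2 + b^2] is positive definite when [b != 0]. *)
Lemma sym_quadratic_mx_inj u (a b : R) : b != 0 ->
  u *m horner_mx A (('X - a%:P) ^+ 2 + (b ^+ 2)%:P) = 0 -> u = 0.
Proof.
move=> bn0; rewrite rmorphD rmorphXn rmorphB /= horner_mx_X !horner_mx_C.
set B := A - a%:M; have symB : B^T = B by rewrite linearB /= symA tr_scalar_mx.
rewrite expr2 mulmxDr mul_mx_scalar mulmxA => uq0.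
have : rv_sqnorm (u *m B) + b ^+ 2 * rv_sqnorm u = 0.
  have := congr1 (fun M : 'rV_n.+1 => (M *m u^T) 0 0) uq0.
  rewrite /= mulmxDl mul0mx [X in _ = X -> _]mxE => <-.
  rewrite mxE [in RHS]mxE /rv_sqnorm trmx_mul symB !mulmxA -scalemxAl mxE.
  by rewrite [in RHS]mxE.
move/eqP; rewrite paddr_eq0 ?rv_sqnorm_ge0 ?(mulr_ge0 (sqr_ge0 b) (rv_sqnorm_ge0 u)) //.
by case/andP=> _; rewrite mulf_eq0 sqrf_eq0 (negbTE bn0) => /eqP/rv_sqnorm_eq0.
Qed.

Lemma eigen_split_coprime_factor l r w : ~~ root r l ->
  w *m horner_mx A (r * ('X - l%:P)) = 0 ->
  exists q, let w1 := w *m horner_mx A q in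
    w1 *m A = l *: w1 /\ (w - w1) *m horner_mx A r = 0.
Proof.
move=> rl wrl0; set c := r.[l]; pose q := c^-1%:P * r; exists q => w1.
have wq1 : w *m horner_mx A (1 - q) = w - w1 by rewrite rmorphB rmorph1 mulmxBr mulmx1.
split.
  apply/eqP; rewrite -subr_eq0 -mul_mx_scalar -mulmxBr -horner_mx_XsubC.
  by rewrite -mulmxA -horner_mxM -mulrA mulrC horner_mxM mulmxA wrl0 mul0mx.
have /factor_theorem [s def_s] : root (1 - q) l.
  by rewrite /root !hornerE -/c mulVf // subrr.
rewrite -wq1 -mulmxA -horner_mxM.
have -> : (1 - q) * r = r * ('X - l%:P) * s by rewrite def_s; ring.
by rewrite horner_mxM mulmxA wrl0 mul0mx.
Qed.

Lemma sym_ann_sqr_factor s l w : w *m horner_mx A (s * ('X - l%:P) ^+ 2) = 0 ->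
  w *m horner_mx A (s * ('X - l%:P)) = 0.
Proof.
move=> ws0; rewrite horner_mxM horner_mx_XsubC mulmxA; apply: sym_mulmx_sqr_eq0.
  by rewrite linearB /= symA tr_scalar_mx.
by rewrite -ws0 expr2 mulrA !horner_mxM horner_mx_XsubC !mulmxA.
Qed.

Lemma sym_eigen_decomp_ann p w : p != 0 -> w *m horner_mx A p = 0 ->
  exists t : seq ('rV[R]_n.+1 * R), w = \sum_(y <- t) y.1 /\
    forall y, y \in t -> y.1 *m A = y.2 *: y.1 /\ cyclic_mem [:: A] w y.1.
Proof.
have [k] := ubnP (size p); elim: k p w => // k IHk p w; rewrite ltnS => spk pn0 wp0.
have [sp1|sp_gt1] := leqP (size p) 1%N.
  move/size1_polyC: sp1 pn0 wp0 => ->; rewrite horner_mx_C mul_mx_scalar.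
  rewrite polyC_eq0 => cn0 /eqP; rewrite scaler_eq0 (negbTE cn0) /= => /eqP ->.
  by exists [::]; rewrite big_nil.
have proper_factor r d : p = r * d -> d != 0 -> (1 < size d)%N -> r != 0 /\ (size r < k)%N.
  move=> def_p dn0 sd; have rn0 : r != 0.
    by apply: contraNneq pn0 => r0; rewrite def_p r0 mul0r.
  split=> //; apply: leq_trans spk; rewrite def_p size_mul // -subn1.
  by rewrite -addnBA ?(ltnW sd) // -{1}[size r]addn0 ltn_add2l subn_gt0.
have [[l [r def_p]]|[a [b [r [bn0 def_p]]]]] := rcf_poly_factor sp_gt1.
- have [rn0 sr] : r != 0 /\ (size r < k)%N.
    by apply: (proper_factor r _ def_p); rewrite ?polyXsubC_eq0 ?size_XsubC.
  have [rl|nrl] := boolP (root r l).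
    apply: (IHk r _ sr rn0); move/factor_theorem: rl def_p => [s ->] def_p.
    by apply: sym_ann_sqr_factor; rewrite expr2 mulrA -def_p.
  rewrite def_p in wp0; have [q [w1eig w2r0]] := eigen_split_coprime_factor nrl wp0.
  have [t [def_w2 tP]] := IHk r _ sr rn0 w2r0.
  exists ((w *m horner_mx A q, l) :: t); split.
    by rewrite big_cons -def_w2 addrC subrK.
  move=> y; rewrite inE => /predU1P [->|yt].
    by split; last exact: cyclic_mem_horner (mem_head _ _).
  have [yeig wy] := tP y yt; split=> //; apply: cyclic_mem_trans wy.
  have -> : w - w *m horner_mx A q = w *m horner_mx A (1 - q).
    by rewrite rmorphB rmorph1 mulmxBr mulmx1.
  exact: cyclic_mem_horner (mem_head _ _).
- set d := _ + _ in def_p.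
  have sd : size d = 3%N.
    by rewrite /d size_addl size_exp_XsubC // (leq_ltn_trans (size_polyC_leq1 _)).
  have [rn0 sr] : r != 0 /\ (size r < k)%N.
    by apply: (proper_factor r _ def_p); rewrite -?size_poly_eq0 sd.
  apply: (IHk r _ sr rn0); apply: (sym_quadratic_mx_inj (a := a) bn0).
  by rewrite -mulmxA -horner_mxM -def_p.
Qed.

End SymmetricOperator.

Lemma sym_comm_eigen_decomp (R : rcfType) n (As : seq 'M[R]_n.+1) :
  {in As, forall A, A^T = A} -> {in As &, forall A B, A *m B = B *m A} ->
  forall w, exists t : seq ('rV[R]_n.+1 * seq R), w = \sum_(y <- t) y.1 /\
    forall y, y \in t -> (forall j, (j < size As)%N -> y.1 *m As`_j = y.2`_j *: y.1)
      /\ cyclic_mem As w y.1.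
Proof.
elim: As => [|A As IHAs] symAs cAs w.
  exists [:: (w, [::])]; rewrite big_seq1; split=> // y; rewrite inE => /eqP ->.
  by split=> //; apply: cyclic_mem_refl.
have [||t [def_w tP]] := IHAs _ _ w.
- by move=> B BAs; apply: symAs; rewrite inE BAs orbT.
- by move=> B C BAs CAs; apply: cAs; rewrite inE ?BAs ?CAs orbT.
pose Q (z : 'rV_n.+1 * seq R) :=
  (forall j, (j < size (A :: As))%N -> z.1 *m (A :: As)`_j = z.2`_j *: z.1)
  /\ cyclic_mem (A :: As) w z.1.
have [s [def_w' sP]] : exists s, \sum_(y <- t) y.1 = \sum_(z <- s) z.1 /\ forall z, z \in s -> Q z.
  apply: big_refine => y yt; have [yeig wy] := tP y yt.
  have ann_y : y.1 *m horner_mx A (mxminpoly A) = 0 by rewrite mx_root_minpoly mulmx0.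
  have [s [def_y sP]] := sym_eigen_decomp_ann (symAs A (mem_head _ _))
    (monic_neq0 (mxminpoly_monic A)) ann_y.
  exists [seq (z.1, z.2 :: y.2) | z <- s]; rewrite big_map; split=> // _ /mapP [z zs ->].
  have [zeig yz] := sP z zs; split => [[|j]|] //=.
    rewrite ltnS => jAs; apply: (yz (fun u => u *m As`_j = y.2`_j *: u)) (yeig j jAs).
    by apply: eigen_pred_stable; apply: cAs; rewrite ?mem_head // inE mem_nth ?orbT.
  apply: cyclic_mem_trans (cyclic_mem_subset _ wy) (cyclic_mem_subset _ yz) => B.
    by rewrite inE => ->; rewrite orbT.
  by rewrite inE => /eqP ->; apply: mem_head.
by exists s; rewrite {1}def_w def_w'.
Qed.

Section LieBracket.
Variables (R : realType) (n : nat).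
Implicit Types (A B C H X Y : 'M[R]_n).

Lemma lieDl A B C : lie (A + B) C = lie A C + lie B C.
Proof. by rewrite /lie mulmxDl mulmxDr opprD addrACA. Qed.

Lemma lieDr A B C : lie A (B + C) = lie A B + lie A C.
Proof. by rewrite /lie mulmxDl mulmxDr opprD addrACA. Qed.

Lemma lieZl (c : R) A B : lie (c *: A) B = c *: lie A B.
Proof. by rewrite /lie scalerBr -scalemxAr -scalemxAl. Qed.

Lemma lieZr (c : R) A B : lie A (c *: B) = c *: lie A B.
Proof. by rewrite /lie scalerBr -scalemxAr -scalemxAl. Qed.

Lemma lieNr A B : lie A (- B) = - lie A B.
Proof. by rewrite -scaleN1r lieZr scaleN1r. Qed.

Lemma lie0l A : lie 0 A = 0.
Proof. by rewrite /lie mul0mx mulmx0 subrr. Qed.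

Lemma lie0r A : lie A 0 = 0.
Proof. by rewrite /lie mul0mx mulmx0 subrr. Qed.

Lemma lieC A B : lie A B = - lie B A.
Proof. by rewrite /lie opprB. Qed.

Lemma lie_self A : lie A A = 0.
Proof. by rewrite /lie subrr. Qed.

Lemma lie_suml (I : Type) (r : seq I) (P : pred I) (F : I -> 'M[R]_n) X :
  lie (\sum_(i <- r | P i) F i) X = \sum_(i <- r | P i) lie (F i) X.
Proof. by elim/big_rec2: _ => [|i Y Z _ <-]; rewrite ?lie0l ?lieDl. Qed.

Lemma lie_jacobi A B C : lie A (lie B C) = lie (lie A B) C + lie B (lie A C).
Proof.
rewrite /lie !mulmxBl !mulmxBr !mulmxA !opprB [RHS]addrACA !addrA !subrK -!addrA.
by congr (_ + _); rewrite addrCA [RHS]addrCA; congr (_ + _); rewrite addrC.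
Qed.

Lemma trmx_lie A B : (lie A B)^T = lie B^T A^T.
Proof. by rewrite /lie linearB /= !trmx_mul. Qed.

End LieBracket.

Section AdjointMatrix.
Variables (R : realType) (n : nat).
Implicit Types (H X Y : 'M[R]_n).

Definition ad_mx H : 'M[R]_(n * n) := lin_mx (mulmx H) - lin_mx (mulmxr H).

Lemma mxvec_ad_mx H X : mxvec X *m ad_mx H = mxvec (lie H X).
Proof. by rewrite mulmxBr !mul_vec_lin /= linearB. Qed.

Lemma mxvec_dot X Y : mxvec X *m (mxvec Y)^T = (\tr (X *m Y^T))%:M.
Proof.
apply/matrixP => i j; rewrite !ord1 !mxE eqxx mulr1n.
rewrite (reindex (uncurry (@mxvec_index n n))); last exact: curry_mxvec_bij.
transitivity (\sum_(p : 'I_n * 'I_n) X p.1 p.2 * Y p.1 p.2).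
  by apply: eq_bigr => -[k l] _; rewrite /= !mxE !mxvecE.
rewrite -(pair_bigA _ (fun i j => X i j * Y i j)); apply: eq_bigr => k _.
by rewrite mxE; apply: eq_bigr => l _; rewrite !mxE.
Qed.

Lemma mxvec_mulmx_inj (M M' : 'M[R]_(n * n)) :
  (forall X, mxvec X *m M = mxvec X *m M') -> M = M'.
Proof.
move=> eqM; apply/row_matrixP => i; rewrite !rowE.
by have := eqM (vec_mx (delta_mx 0 i)); rewrite vec_mxK.
Qed.

Lemma mulmx_tr_mxvec_inj (u v : 'rV[R]_(n * n)) :
  (forall Y, u *m (mxvec Y)^T = v *m (mxvec Y)^T) -> u = v.
Proof.
move=> eqY; apply/rowP => k; have := eqY (vec_mx (delta_mx 0 k)).
by rewrite vec_mxK trmx_delta -!colE => /matrixP /(_ 0 0); rewrite !mxE.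
Qed.

(* [ad H] is self-adjoint for the trace form [(X, Y) |-> \tr (X Y^T)]. *)
Lemma ad_mx_sym H : H^T = H -> (ad_mx H)^T = ad_mx H.
Proof.
move=> symH; apply: mxvec_mulmx_inj => X; apply: mulmx_tr_mxvec_inj => Y.
rewrite [LHS]mx11_scalar -tr_scalar_mx -mx11_scalar !trmx_mul !trmxK mulmxA.
rewrite !mxvec_ad_mx !mxvec_dot /lie !mulmxBl !raddfB /=; congr (_%:M - _%:M).
  by rewrite -mxtrace_tr !trmx_mul trmxK symH !mulmxA mxtrace_mulC mulmxA.
by rewrite -mxtrace_tr !trmx_mul trmxK symH !mulmxA.
Qed.

Lemma ad_mx_comm H H' : lie H H' = 0 -> ad_mx H *m ad_mx H' = ad_mx H' *m ad_mx H.
Proof.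
move=> cHH'; apply: mxvec_mulmx_inj => X; rewrite !mulmxA !mxvec_ad_mx.
by rewrite (lie_jacobi H') (lieC H' H) cHH' oppr0 lie0l add0r.
Qed.

End AdjointMatrix.

Section Weight.
Variables (R : realType) (n : nat) (a : {vspace 'M[R]_n}).

Definition weight (lam : seq R) (H : 'M[R]_n) :=
  \sum_(i < \dim a) coord (vbasis a) i H * lam`_i.

Lemma weight_lin lam (s t : R) H H' :
  weight lam (s *: H + t *: H') = s * weight lam H + t * weight lam H'.
Proof.
rewrite /weight !mulr_sumr -big_split /=; apply: eq_bigr => i _.
by rewrite linearD !linearZ /= mulrDl !mulrA.
Qed.

End Weight.

Lemma sym_abelian_weight_decomp (R : realType) n (a : {vspace 'M[R]_n})
    (Q : 'M[R]_n -> Prop) :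
    (forall H, H \in a -> H^T = H) -> abelian_sub a ->
    (forall Y Z, Q Y -> Q Z -> Q (Y + Z)) -> (forall (c : R) Y, Q Y -> Q (c *: Y)) ->
    (forall H Y, H \in a -> Q Y -> Q (lie H Y)) ->
  forall X, Q X -> exists s : seq ('M[R]_n * seq R), X = \sum_(y <- s) y.1 /\
    forall y, y \in s -> Q y.1 /\ forall H, H \in a -> lie H y.1 = weight a y.2 H *: y.1.
Proof.
case: n a Q => [|m] a Q symA abA QD QZ QL X QX.
  by exists [::]; rewrite big_nil; split=> //; apply/matrixP => -[].
(* [N.+1] is convertible to [m.+1 * m.+1]; [mxminpoly] needs a successor size. *)
pose N := (m + m * m.+1)%N.
pose As : seq 'M[R]_N.+1 := [seq ad_mx H | H <- vbasis a].
have As_j j : (j < \dim a)%N -> As`_j = ad_mx (vbasis a)`_j.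
  by move=> ja; rewrite (nth_map 0) // size_tuple.
pose vm (u : 'rV[R]_N.+1) : 'M[R]_m.+1 := vec_mx (u : 'rV_(m.+1 * m.+1)).
have vm_ad (H : 'M[R]_m.+1) (u : 'rV[R]_N.+1) : vm (u *m (ad_mx H : 'M_N.+1)) = lie H (vm u).
  by have := mxvec_ad_mx H (vm u); rewrite /vm vec_mxK => ->; rewrite mxvecK.
have [||t [def_X tP]] := sym_comm_eigen_decomp (As := As) _ _ (mxvec X : 'rV_N.+1).
- by move=> _ /mapP [H Ha ->]; exact: (ad_mx_sym (symA _ (vbasis_mem Ha))).
- move=> _ _ /mapP [H Ha ->] /mapP [H' H'a ->].
  exact: (ad_mx_comm (abA _ _ (vbasis_mem Ha) (vbasis_mem H'a))).
exists [seq (vm y.1, y.2) | y <- t]; split.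
  by rewrite big_map -[X]mxvecK def_X /vm linear_sum.
move=> _ /mapP [y yt ->] /=; have [yeig Xy] := tP y yt; split.
  apply: (Xy (fun u => Q (vm u))); last by rewrite /vm mxvecK.
  split=> [u v Qu Qv|c u Qu|_ u /mapP [H Ha ->] Qu].
  - by rewrite /vm linearD; apply: QD.
  - by rewrite /vm linearZ; apply: QZ.
  - by rewrite vm_ad; apply: QL => //; apply: vbasis_mem.
move=> H Ha; rewrite {1}(coord_vbasis Ha) lie_suml /weight scaler_suml.
apply: eq_bigr => j _; rewrite lieZl -vm_ad -As_j // yeig ?size_map ?size_tuple //.
by rewrite /vm linearZ scalerA.
Qed.

Section Centralizer.
Variables (R : realType) (n : nat) (g : {vspace 'M[R]_n}).
Implicit Types (V P : {vspace 'M[R]_n}) (X : 'M[R]_n).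

Definition ad_lfun (v : 'M[R]_n) : 'End('M[R]_n) :=
  linfun (mulmx v) - linfun (mulmxr v).

Lemma ad_lfunE v X : ad_lfun v X = lie v X.
Proof. by rewrite add_lfunE opp_lfunE !lfunE. Qed.

Definition p_centralizer V : {vspace 'M[R]_n} :=
  (g :&: lker (linfun (@trmx R n n) - \1%VF) :&:
   \bigcap_(i < \dim V) lker (ad_lfun (vbasis V)`_i))%VS.

Lemma mem_p_centralizer V X :
  X \in p_centralizer V <-> [/\ X \in g, X^T = X & forall v, v \in V -> lie v X = 0].
Proof.
rewrite !memv_cap memv_ker add_lfunE opp_lfunE !lfunE /= subr_eq0.
have -> : (X \in \bigcap_(i < \dim V) lker (ad_lfun (vbasis V)`_i))%VS =
    [forall i : 'I_(\dim V), lie (vbasis V)`_i X == 0].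
  apply/idP/forallP => [XV i|XV].
    move: XV; rewrite memvE => /subv_bigcapP /(_ i isT); rewrite -memvE memv_ker.
    by rewrite ad_lfunE.
  rewrite memvE; apply/subv_bigcapP => i _; rewrite -memvE memv_ker.
  by rewrite ad_lfunE; exact: XV.
split=> [/andP [/andP [Xg /eqP symX] /forallP XV]|[Xg symX XV]].
  split=> // v vV; rewrite (coord_vbasis vV) lie_suml big1 // => i _.
  by rewrite lieZl (eqP (XV i)) scaler0.
rewrite Xg symX eqxx /=; apply/forallP => i.
by rewrite XV // vbasis_mem // mem_nth // size_tuple.
Qed.

Lemma p_centralizer_lts V : lie_subalg g -> lts g (p_centralizer V).
Proof.
move=> lie_g; split=> [X /mem_p_centralizer [Xg symX _] //|A B C].
move=> /mem_p_centralizer [Ag symA AV] /mem_p_centralizer [Bg symB BV].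
move=> /mem_p_centralizer [Cg symC CV]; apply/mem_p_centralizer; split.
- exact: (lie_g _ _ Ag (lie_g _ _ Bg Cg)).
- by rewrite !trmx_lie symA symB symC lieC (lieC C) lieNr opprK.
- move=> v vV; rewrite (lie_jacobi v A) (lie_jacobi v B) (AV v vV) (BV v vV).
  by rewrite (CV v vV) !(lie0l, lie0r, add0r).
Qed.

Lemma splits_with_sub_p_centralizer P V k :
  splits_with g P V k -> (P <= p_centralizer V)%VS.
Proof.
case=> [[symP _] _ _ VP]; apply/subvP => X XP; apply/mem_p_centralizer.
by have [Xg symX] := symP X XP; split=> // v vV; apply: VP.
Qed.

Lemma p_centralizer_splits_with P V k : lie_subalg g ->
  splits_with g P V k -> splits_with g (p_centralizer V) V k.
Proof.
move=> lie_g splitP; have [[symP _] sVP dimV VP] := splitP; split=> //.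
- exact: p_centralizer_lts.
- apply/subvP => v vV; have vP := subvP sVP v vV; have [vg symv] := symP v vP.
  by apply/mem_p_centralizer; split=> // w wV; apply: VP => //; apply: (subvP sVP).
- by move=> v X vV /mem_p_centralizer [_ _]; apply.
Qed.

Lemma srk_splits_with_eq_p_centralizer P V k : lie_subalg g ->
  splits_with g P V k -> srk_is g k (\dim P) -> P = p_centralizer V.
Proof.
move=> lie_g splitP [_ maxP]; apply/eqP; rewrite eqEdim.
rewrite (splits_with_sub_p_centralizer splitP) maxP //.
by exists V; apply: p_centralizer_splits_with splitP.
Qed.

End Centralizer.

Section RootDecomposition.
Variables (R : realType) (n : nat) (g a : {vspace 'M[R]_n}) (H0 : 'M[R]_n).
Hypotheses (trg : transpose_closed g) (maxa : max_abelian g a).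
Implicit Types (V : {vspace 'M[R]_n}) (H X Y S : 'M[R]_n) (al : 'M[R]_n -> R).

Let sym_a H : H \in a -> H^T = H.
Proof. by case: maxa => pa _ _ /pa []. Qed.

Lemma max_abelian_mem S : S \in g -> S^T = S ->
  (forall H, H \in a -> lie H S = 0) -> S \in a.
Proof.
case: maxa => pa aba maxa' Sg symS aS; suff <- : (a + <[S]>)%VS = a.
  by rewrite (subvP (addvSr _ _)) // memv_line.
have mem_aS Y : Y \in (a + <[S]>)%VS -> exists2 H, H \in a & exists c, Y = H + c *: S.
  by case/memv_addP => H Ha [_ /vlineP [c ->] ->]; exists H => //; exists c.
apply: maxa' (addvSl _ _) => [Y /mem_aS [H Ha [c ->]]|Y Z].
  have [Hg symH] := pa H Ha; split; first by rewrite memvD // memvZ.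
  by rewrite linearD linearZ /= symH symS.
move=> /mem_aS [H Ha [c ->]] /mem_aS [H' H'a [d ->]].
rewrite !lieDl !lieDr !lieZl !lieZr (aba _ _ Ha H'a) (aS _ Ha) (lieC S H') (aS _ H'a).
by rewrite lie_self !(scaler0, oppr0, addr0).
Qed.

Definition sym_part Y := 2^-1 *: (Y + Y^T).

Lemma sym_partE X : X^T = X -> sym_part X = X.
Proof.
move=> symX; rewrite /sym_part symX -mulr2n -scaler_nat scalerA.
by rewrite mulVf ?pnatr_eq0 // scale1r.
Qed.

Lemma trmx_sym_part Y : (sym_part Y)^T = sym_part Y.
Proof. by rewrite /sym_part linearZ linearD /= trmxK addrC. Qed.

Lemma sym_part_sum (I : Type) (r : seq I) (F : I -> 'M[R]_n) :
  sym_part (\sum_(i <- r) F i) = \sum_(i <- r) sym_part (F i).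
Proof. by rewrite /sym_part linear_sum -big_split /= -scaler_sumr. Qed.

Lemma lie_a_trmx H Y : H \in a -> lie H Y^T = - (lie H Y)^T.
Proof. by move=> Ha; rewrite -{1}(sym_a Ha) -trmx_lie lieC linearN. Qed.

Lemma root_space_trmx al Y : root_space g a al Y -> root_space g a (fun H => - al H) Y^T.
Proof.
case=> Yg alY; split=> [|H Ha]; first exact: trg.
by rewrite lie_a_trmx // alY // linearZ /= scaleNr.
Qed.

Lemma sym_part_zero_weight Y : Y \in g -> (forall H, H \in a -> lie H Y = 0) ->
  sym_part Y \in a.
Proof.
move=> Yg aY; apply: max_abelian_mem; rewrite ?trmx_sym_part //.
  by rewrite memvZ // memvD // trg.
by move=> H Ha; rewrite lieZr lieDr lie_a_trmx // aY // trmx0 oppr0 addr0 scaler0.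
Qed.

Lemma p_root_sym_part al Y : root_space g a al Y -> p_root g a al (sym_part Y).
Proof.
move=> alY; split; first exact: trmx_sym_part.
have [Yg aY] := alY; have [YTg aYT] := root_space_trmx alY.
exists (2^-1 *: Y), (2^-1 *: Y^T); split; last by rewrite /sym_part scalerDr.
- by split=> [|H Ha]; rewrite ?memvZ // lieZr aY // !scalerA mulrC.
- by split=> [|H Ha]; rewrite ?memvZ // lieZr aYT // !scalerA mulrC.
Qed.

Lemma p_rootN al X : p_root g a al X -> p_root g a (fun H => - al H) X.
Proof.
case=> symX [Y [Z [[Yg aY] aZ def_X]]]; split=> //; exists Z, Y; split.
- exact: aZ.
- by split=> // H Ha; rewrite opprK aY.
- by rewrite def_X addrC.
Qed.

Lemma is_rootN al : is_root g a al -> is_root g a (fun H => - al H).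
Proof.
case=> lin_al [H [Ha alH]] [Y [Yn0 alY]]; split.
- by move=> s t H1 H2 H1a H2a; rewrite lin_al // opprD -!mulrN.
- by exists H; rewrite oppr_eq0.
- by exists Y^T; rewrite trmx_eq0; split=> //; apply: root_space_trmx.
Qed.

Definition linear_on al := forall (s t : R) H H', H \in a -> H' \in a ->
  al (s *: H + t *: H') = s * al H + t * al H'.

Lemma weight_vector_sym_part_mem al Y : regular g a H0 -> linear_on al ->
  root_space g a al Y -> (Y == 0) || (al H0 == 0) -> sym_part Y \in a.
Proof.
move=> [_ regH0] lin_al [Yg aY] /orP [/eqP ->|/eqP alH0].
  by rewrite /sym_part trmx0 addr0 scaler0 mem0v.
apply: sym_part_zero_weight => // H Ha; rewrite aY //.
have [->|alH] := eqVneq (al H) 0; first by rewrite scale0r.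
have [->|Yn0] := eqVneq Y 0; first by rewrite scaler0.
(* otherwise [al] would be a root vanishing at the regular element [H0] *)
have al_root : is_root g a al by split=> //; [exists H | exists Y]; split.
by have := regH0 al al_root; rewrite alH0 eqxx.
Qed.

Definition orient al : 'M[R]_n -> R := if 0 < al H0 then al else fun H => - al H.

Lemma orient_pos al : al H0 != 0 -> 0 < orient al H0.
Proof.
rewrite /orient; case: ifP => // /negbT; rewrite -leNgt => al_le0 aln0.
by rewrite oppr_gt0 lt_neqAle aln0.
Qed.

Lemma orient_is_root al : is_root g a al -> is_root g a (orient al).
Proof. by rewrite /orient; case: ifP => // _; apply: is_rootN. Qed.

Lemma orient_p_root al X : p_root g a al X -> p_root g a (orient al) X.
Proof. by rewrite /orient; case: ifP => // _; apply: p_rootN. Qed.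

Lemma orient_eq0 al H : al H = 0 -> orient al H = 0.
Proof. by rewrite /orient; case: ifP => // _ ->; rewrite oppr0. Qed.

Lemma weight_vector_positive_root V al Y : H0 \in a -> linear_on al -> root_space g a al Y ->
  Y != 0 -> al H0 != 0 -> (forall v, v \in V -> al v = 0) ->
  [/\ is_root g a (orient al), 0 < orient al H0,
      forall v, v \in V -> orient al v = 0 & p_root g a (orient al) (sym_part Y)].
Proof.
move=> H0a lin_al alY Yn0 alH0 alV; split.
- by apply: orient_is_root; split=> //; [exists H0 | exists Y]; split.
- exact: orient_pos.
- by move=> v vV; apply/orient_eq0/alV.
- exact/orient_p_root/p_root_sym_part.
Qed.

Lemma p_centralizer_weight_decomp V X : lie_subalg g -> (V <= a)%VS ->
  X \in p_centralizer g V -> exists s : seq ('M[R]_n * seq R),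
    X = \sum_(y <- s) y.1 /\ forall y, y \in s ->
      root_space g a (weight a y.2) y.1 /\ forall v, v \in V -> lie v y.1 = 0.
Proof.
move=> lie_g sVa /mem_p_centralizer [Xg _ XV]; have [pa aba _] := maxa.
pose Q Y := Y \in g /\ forall v, v \in V -> lie v Y = 0.
have [] := sym_abelian_weight_decomp (Q := Q) sym_a aba _ _ _ (conj Xg XV).
- move=> Y Z [Yg YV] [Zg ZV]; split=> [|v vV]; first by rewrite memvD.
  by rewrite lieDr YV // ZV // addr0.
- move=> c Y [Yg YV]; split=> [|v vV]; first by rewrite memvZ.
  by rewrite lieZr YV // scaler0.
- move=> H Y Ha [Yg YV]; split=> [|v vV]; first by apply: lie_g => //; case: (pa H Ha).
  by rewrite lie_jacobi (aba _ _ (subvP sVa v vV) Ha) lie0l add0r YV // lie0r.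
move=> s [def_X sP]; exists s; split=> // y /sP [[yg yV] ya].
by split=> //; split.
Qed.

Lemma p_centralizer_root_decomp V X : lie_subalg g -> regular g a H0 ->
  (V <= a)%VS -> X \in p_centralizer g V -> in_a_plus_roots g a V H0 X.
Proof.
move=> lie_g regH0 sVa XZ; have /mem_p_centralizer [_ symX _] := XZ.
have [s [def_X sP]] := p_centralizer_weight_decomp lie_g sVa XZ.
pose wt (y : 'M[R]_n * seq R) := weight a y.2.
have wt_lin y : linear_on (wt y) by move=> c d H H' _ _; apply: weight_lin.
pose nonzero y := (y.1 != 0) && (wt y H0 != 0).
pose y0 := (0 : 'M[R]_n, [::] : seq R); pose s' := [seq y <- s | nonzero y].
exists (\sum_(y <- s | ~~ nonzero y) sym_part y.1), (size s'),
  (fun i => orient (wt (nth y0 s' i))), (fun i => sym_part (nth y0 s' i).1); split.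
- rewrite big_seq_cond; apply: memv_suml => y /andP [/sP [alY _]].
  by rewrite negb_and !negbK; apply: weight_vector_sym_part_mem (wt_lin y) alY.
- move=> i; have : nth y0 s' i \in s' by rewrite mem_nth.
  rewrite mem_filter => /andP [/andP [yn0 wtH0] /sP [alY yV]].
  apply: (weight_vector_positive_root regH0.1 (wt_lin _) alY yn0 wtH0) => v vV.
  have [_ ya] := alY; apply/eqP.
  by have /eqP := yV v vV; rewrite ya ?(subvP sVa) // scaler_eq0 (negbTE yn0) orbF.
rewrite -(sym_partE symX) def_X sym_part_sum (bigID nonzero) /= addrC.
by congr (_ + _); rewrite -big_filter (big_nth y0) big_mkord.
Qed.

Lemma root_decomp_p_centralizer V X :
  (V <= a)%VS -> in_a_plus_roots g a V H0 X -> X \in p_centralizer g V.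
Proof.
have [pa aba _] := maxa.
move=> sVa [H [m [al [Xs [Ha rootsXs ->]]]]]; rewrite memvD //.
  have [Hg symH] := pa H Ha; apply/mem_p_centralizer; split=> // v vV.
  exact: aba (subvP sVa v vV) Ha.
apply: memv_suml => i _; have [_ _ alV [symXi [Y [Z [[Yg aY] [Zg aZ] def_Xi]]]]] := rootsXs i.
apply/mem_p_centralizer; split=> //; first by rewrite def_Xi memvD.
move=> v vV; have va := subvP sVa v vV.
by rewrite def_Xi lieDr aY // aZ // alV // oppr0 !scale0r addr0.
Qed.

End RootDecomposition.

Theorem proposition2p13 (R : realType) (n : nat) (g : {vspace 'M[R]_n})
  (r k : nat) (P V : {vspace 'M[R]_n}) :
  noncompact_type g -> rank_is g r -> (1 <= k)%N -> (k <= r)%N ->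
  splits_with g P V k -> srk_is g k (\dim P) ->
  forall a : {vspace 'M[R]_n}, max_abelian g a -> (V <= a)%VS ->
  forall H0 : 'M[R]_n, regular g a H0 ->
  forall X : 'M[R]_n, X \in P <-> in_a_plus_roots g a V H0 X.
Proof.
move=> [lie_g trg _ _] _ _ _ splitP srkP a maxa sVa H0 regH0 X.
rewrite (srk_splits_with_eq_p_centralizer lie_g splitP srkP); split.
- exact: p_centralizer_root_decomp.
- exact: root_decomp_p_centralizer.
Qed.
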